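(* Let $n\ge2$ and $\mu=2^{n-1}1$. Then $\operatorname{im}(\eta)\subseteq\operatorname{im}(\varphi)$ as subspaces of $\tilde M^{\mu}\cong V_{n,3}$.
   Context: All vector spaces are over $\mathbb C$. A tableau of shape $\lambda\vdash N$ uses each element of $[N]$ once; $C_t$ is its column stabilizer; $\tilde M^\lambda$ is the span of column tabloids $[t]$ modulo $[t]=\operatorname{sgn}(\beta)[\beta t]$, $\beta\in C_t$, with $S_N$ acting by $\sigma[t]=[\sigma t]$. For a column $c$ and $1\le \ell\le$ (length of column $c+1$), $\pi^{\ell}_{c,1}([t])$ is the sum, over all entries $x$ of column $c$ of $t$, of the column tabloids $[t']$ with $t'$ obtained from $t$ by swapping $x$ with the $\ell$-th entry of column $c+1$. For $\mu=2^{m}1^{n-m}$ (columns of lengths $n,m$), $\eta([t])=m[t]-\sum_{j=1}^m\pi^j_{1,1}([t])$; here $m=n-1$. $V_{n,3}$ is the $\mathbb C$-span of left-comb brackets $[[x_1,\dots,x_n],y_1,\dots,y_{n-1}]$ with $\{x_i\}\cup\{y_j\}=[2n-1]$, modulo antisymmetry in the $x$'s and separately in the $y$'s; it is identified with $\tilde M^{2^{n-1}1}$ by sending such a bracket to the column tabloid with first column the $x$'s and second column the $y$'s. The map $\varphi:V_{n,3}\to V_{n,3}$ is $\varphi([[x_1,\dots,x_n],y_1,\dots,y_{n-1}])=[[x_1,\dots,x_n],y_1,\dots,y_{n-1}]-\sum_{i=1}^n(-1)^{n-i}[[y_1,\dots,y_{n-1},x_i],x_1,\dots,\widehat{x_i},\dots,x_n]$.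 *)

From HB Require Import structures.
From mathcomp Require Import all_boot all_order all_algebra all_fingroup all_field.
Set Implicit Arguments. Unset Strict Implicit. Unset Printing Implicit Defensive.
Import GRing.Theory Num.Theory.
Local Open Scope ring_scope.

(* Shape mu = 2^{n-1} 1 of N = 2n-1 : first column of length n, second of
   length n-1.  We write N n := (n.-1 + n.-1).+1, which is 2n-1 for n >= 1.
   Cells are numbered by 'I_(N n): cells 0..n-1 are the first column (top to
   bottom), cells n..2n-2 are the second column (top to bottom).
   The entries [N] = {1..N} are represented by 'I_(N n) (shifted by one).
   A tableau t is a bijection cells -> entries, i.e. a permutation:
   t k = entry in cell k. *)
Definition N (n : nat) : nat := (n.-1 + n.-1).+1.
Definition tableau (n : nat) := {perm 'I_(N n)}.

Definition col (n : nat) (k : 'I_(N n)) : bool := (n <= k)%N.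

(* Action of sigma in S_N on tableaux: (sigma t) k = sigma (t k).
   In mathcomp (s * t) x = t (s x), hence sigma t = (t * sigma)%g. *)
Definition act (n : nat) (sigma : {perm 'I_(N n)}) (t : tableau n) : tableau n :=
  (t * sigma)%g.

(* beta belongs to the column stabilizer C_t: beta maps the entries of each
   column of t to entries of the same column of t. *)
Definition colstab (n : nat) (t : tableau n) (beta : {perm 'I_(N n)}) : bool :=
  [forall k : 'I_(N n), col ((t^-1)%g (beta (t k))) == col k].

(* Free vector space over C (algC) on tableaux; column tabloids [t] are the
   images of the basis vectors e t in the quotient by the relations below. *)
Definition FV (n : nat) := {ffun tableau n -> algC^o}.
Definition e (n : nat) (t : tableau n) : FV n := [ffun s => (s == t)%:R].

(* The defining relations of \tilde M^mu: [t] = sgn(beta) [beta t]. *)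
Definition rel (n : nat) (t : tableau n) (beta : {perm 'I_(N n)}) : FV n :=
  e t - (-1) ^+ (odd_perm beta) *: e (act beta t).

Definition cell1 (n : nat) (k : nat) : 'I_(N n) := inord k.        (* column 1, row k (0-based) *)
Definition cell2 (n : nat) (j : nat) : 'I_(N n) := inord (n + j).  (* column 2, row j (0-based) *)

Definition swap (n : nat) (t : tableau n) (a b : 'I_(N n)) : tableau n :=
  (tperm a b * t)%g.

(* pi^{l}_{1,1} (l = j+1) lifted to tableaux *)
Definition pi11 (n : nat) (j : nat) (t : tableau n) : FV n :=
  \sum_(k < n) e (swap t (cell1 n k) (cell2 n j)).

Definition eta (n : nat) (t : tableau n) : FV n :=
  (n.-1)%:R *: e t - \sum_(j < n.-1) pi11 j t.

(* Build a permutation from a function (used only on injective functions). *)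
Definition perm_or1 (T : finType) (f : T -> T) : {perm T} :=
  match injectiveb f as b return injectiveb f = b -> {perm T} with
  | true => fun H => perm (injectiveP f H)
  | false => fun _ => 1%g
  end erefl.

(* For i (0-based, i < n), the tableau of
   [[y_1,...,y_{n-1}, x_{i+1}], x_1,...,\hat{x_{i+1}},...,x_n]
   where t = [[x_1..x_n], y_1..y_{n-1}].  New cell k receives the entry of
   old cell gamma_nat n i k. *)
Definition gamma_nat (n i k : nat) : nat :=
  if (k < n.-1)%N then (n + k)%N
  else if k == n.-1 then i
  else if (k - n < i)%N then (k - n)%N else (k - n).+1.

Definition gamma (n i : nat) : {perm 'I_(N n)} :=
  perm_or1 (fun k : 'I_(N n) => (inord (gamma_nat n i k) : 'I_(N n))).

Definition phiT (n : nat) (t : tableau n) (i : nat) : tableau n :=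
  (gamma n i * t)%g.

Definition phi (n : nat) (t : tableau n) : FV n :=
  e t - \sum_(i < n) (-1) ^+ (n.-1 - i) *: e (phiT t i).

(* v lies in  span{phi(s)} + R, i.e. its class in \tilde M^mu = FV/R lies in
   im(phi). *)
Definition in_im_phi_mod_rel (n : nat) (v : FV n) : Prop :=
  exists (c : {ffun tableau n -> algC})
         (d : {ffun tableau n * {perm 'I_(N n)} -> algC}),
    v = \sum_s c s *: phi s
        + \sum_(p : tableau n * {perm 'I_(N n)} | colstab p.1 p.2) d p *: rel p.1 p.2.

From Pilot Require Import Defs.
From mathcomp Require Import all_boot all_order all_algebra all_fingroup all_field.
From mathcomp Require Import zify ring.
Set Implicit Arguments. Unset Strict Implicit. Unset Printing Implicit Defensive.

(* Write t = [[x_1..x_n], y_1..y_{n-1}] and s_i = (-1)^(n-1-i).  Then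
   eta[t] + phi[t] + sum_i s_i phi[gamma_i t] splits into terms of two kinds:
   [t] - s_i [gamma_{n-1} gamma_i t], where gamma_{n-1} gamma_i is the cycle
   moving x_i to the bottom of the first column, of sign s_i; and
   [t'] + s_i s_k [gamma_k gamma_i t], where t' is t with x_i and y_k swapped
   and gamma_k gamma_i is that transposition followed by one cycle in each
   column, of total sign -s_i s_k.  Each term is a defining relation
   [u] - sgn(beta) [beta u] of the column-tabloid module, so eta[t] lies in
   im(phi). *)

Lemma perm_or1E (T : finType) (f : T -> T) : injective f -> perm_or1 f =1 f.
Proof.
move=> f_inj x; have f_injb : injectiveb f by apply/injectiveP.
rewrite /perm_or1; move: (erefl (injectiveb f)); rewrite {2 3}f_injb => ?.
by rewrite permE.
Qed.

Ltac case_ifs :=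
  repeat match goal with
  | |- context [if ?b then _ else _] =>
      lazymatch b with
      | context [if _ then _ else _] => fail
      | true => fail | false => fail
      | _ => case: (boolP b) => ?
      end
  end; simpl.

Section CellPermutations.

Variable n : nat.
Hypothesis n_gt1 : 1 < n.

Definition perm_of_nat (f : nat -> nat) : {perm 'I_(N n)} :=
  perm_or1 (fun c : 'I_(N n) => (inord (f c) : 'I_(N n))).

Lemma perm_of_natE (f : nat -> nat) :
  (forall c, c < N n -> f c < N n) ->
  (forall c1 c2, c1 < N n -> c2 < N n -> f c1 = f c2 -> c1 = c2) ->
  forall c : 'I_(N n), val (perm_of_nat f c) = f c.
Proof.
move=> f_lt f_inj c; rewrite /perm_of_nat perm_or1E /= ?inordK ?f_lt //.
move=> c1 c2 /(congr1 val); rewrite /= !inordK ?f_lt // => /f_inj eq_c.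
exact/val_inj/eq_c.
Qed.

Definition cycle_nat (a b c : nat) : nat :=
  if (a <= c) && (c < b) then c.+1 else if c == b then a else c.

Definition cycle_perm (a b : nat) := perm_of_nat (cycle_nat a b).

Lemma cycle_permE a b (c : 'I_(N n)) : a <= b -> b < N n ->
  val (cycle_perm a b c) = cycle_nat a b c.
Proof.
move=> le_ab lt_b; apply: perm_of_natE => [x|x y]; rewrite /cycle_nat; case_ifs; lia.
Qed.

Lemma gammaE i (c : 'I_(N n)) : i < n -> val (gamma n i c) = gamma_nat n i c.
Proof.
move=> lt_i; apply: (@perm_of_natE (gamma_nat n i)) => [x|x y];
  rewrite /gamma_nat /N; case_ifs; lia.
Qed.

Lemma tperm_inordE (a b : nat) (z : 'I_(N n)) : a < N n -> b < N n ->
  val (tperm (inord a : 'I_(N n)) (inord b) z) =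
  if val z == a then b else if val z == b then a else val z.
Proof.
move=> lt_a lt_b; case: tpermP => [->|->|/eqP za /eqP zb]; rewrite /= ?inordK //.
- by rewrite eqxx.
- by rewrite eqxx; case: eqP.
have /negPf-> : val z != a by apply: contra za => /eqP za; apply/eqP/val_inj; rewrite /= inordK.
have /negPf-> : val z != b by apply: contra zb => /eqP zb; apply/eqP/val_inj; rewrite /= inordK.
by [].
Qed.

Lemma odd_cycle_perm a b : a <= b -> b < N n -> odd_perm (cycle_perm a b) = odd (b - a).
Proof.
move=> le_ab lt_b; move def_d: (b - a) => d.
elim: d a le_ab def_d => [|d IHd] a le_ab def_d.
  have -> : cycle_perm a b = 1%g.
    apply/permP => c; apply/val_inj; rewrite cycle_permE // perm1 /cycle_nat.
    case_ifs; lia.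
  by rewrite odd_perm1.
have -> : cycle_perm a b = (cycle_perm a.+1 b * tperm (inord a : 'I_(N n)) (inord a.+1))%g.
  apply/permP => c; apply/val_inj; rewrite permM tperm_inordE ?cycle_permE; try lia.
  by rewrite /cycle_nat; have := ltn_ord c; case_ifs; lia.
have /negPf neq_a : (inord a : 'I_(N n)) != inord a.+1.
  by apply/eqP => /(congr1 val); rewrite /= !inordK; move: lt_b; rewrite /N; lia.
by rewrite odd_permM IHd ?odd_tperm ?neq_a ?addbT; lia.
Qed.

Lemma col_cycle_perm a b (c : 'I_(N n)) : a <= b -> b < N n -> (b < n) || (n <= a) ->
  Defs.col (cycle_perm a b c) = Defs.col c.
Proof. by move=> *; rewrite /Defs.col cycle_permE // /cycle_nat; have := ltn_ord c; case_ifs; lia. Qed.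

Lemma gamma_last_mul_gamma i : i < n ->
  (gamma n n.-1 * gamma n i)%g = cycle_perm i n.-1.
Proof.
move=> lt_i; apply/permP => c; apply/val_inj.
rewrite permM !gammaE ?cycle_permE /N; try lia.
by rewrite /gamma_nat /cycle_nat; have := ltn_ord c; rewrite /N; case_ifs; lia.
Qed.

Lemma gamma_mul_gamma i k : i < n -> k < n.-1 ->
  (gamma n k * gamma n i)%g =
  (cycle_perm i n.-1 * cycle_perm (n + k) (n.-1 + n.-1) * tperm (cell1 n i) (cell2 n k))%g.
Proof.
move=> lt_i lt_k; apply/permP => c; apply/val_inj.
rewrite !permM /cell1 /cell2 tperm_inordE /N; try lia.
rewrite !gammaE ?cycle_permE /N; try lia.
by rewrite /gamma_nat /cycle_nat; have := ltn_ord c; rewrite /N; case_ifs; lia.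
Qed.

End CellPermutations.

Import GRing.Theory.
Local Open Scope ring_scope.

Section FiniteSpan.

Variables (R : pzRingType) (V : lmodType R) (I : finType) (P : pred I) (f : I -> V).

Definition in_span (v : V) : Prop :=
  exists d : {ffun I -> R}, v = \sum_(i | P i) d i *: f i.

Lemma in_span0 : in_span 0.
Proof. by exists 0; rewrite big1 // => i _; rewrite ffunE scale0r. Qed.

Lemma in_spanD v w : in_span v -> in_span w -> in_span (v + w).
Proof.
move=> [d ->] [d' ->]; exists (d + d'); rewrite -big_split.
by apply: eq_bigr => i _; rewrite ffunE scalerDl.
Qed.

Lemma in_spanZ a v : in_span v -> in_span (a *: v).
Proof.
move=> [d ->]; exists [ffun i => a * d i]; rewrite scaler_sumr.
by apply: eq_bigr => i _; rewrite ffunE scalerA.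
Qed.

Lemma in_spanN v : in_span v -> in_span (- v).
Proof. by rewrite -scaleN1r; apply: in_spanZ. Qed.

Lemma in_spanB v w : in_span v -> in_span w -> in_span (v - w).
Proof. by move=> span_v /in_spanN; apply: in_spanD. Qed.

Lemma in_span_sum (J : finType) (F : J -> V) :
  (forall j, in_span (F j)) -> in_span (\sum_j F j).
Proof. by move=> span_F; apply: big_ind => //; [apply: in_span0 | apply: in_spanD]. Qed.

Lemma in_span_gen i : P i -> in_span (f i).
Proof.
move=> Pi; exists [ffun j => (j == i)%:R].
rewrite (bigD1 i) //= ffunE eqxx scale1r big1 ?addr0 // => j /andP[_ /negPf ji].
by rewrite ffunE ji scale0r.
Qed.

End FiniteSpan.

Definition rel_span n : FV n -> Prop :=
  in_span (fun p : tableau n * {perm 'I_(N n)} => colstab p.1 p.2)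
          (fun p => Defs.rel p.1 p.2).

Lemma im_phi_mod_rel_of_spans n (v w : FV n) :
  in_span predT (@phi n) w -> rel_span (v - w) -> in_im_phi_mod_rel v.
Proof. by move=> [c ->] [d def_d]; exists c, d; rewrite -def_d addrC subrK. Qed.

Lemma rel_span_col_perm n (u : tableau n) (g : {perm 'I_(N n)}) :
  (forall k, Defs.col (g k) = Defs.col k) ->
  rel_span (e u - (-1) ^+ odd_perm g *: e (g * u)%g).
Proof.
move=> col_g; have -> : (g * u = Defs.act (u^-1 * g * u) u)%g by rewrite /Defs.act !mulgA mulgV mul1g.
have -> : odd_perm g = odd_perm (u^-1 * g * u)%g.
  by rewrite !odd_permM odd_permV; case: (odd_perm u); case: (odd_perm g).
apply: (@in_span_gen _ _ _ _ _ (u, (u^-1 * g * u)%g)).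
by apply/forallP => k /=; rewrite !permM !permK col_g.
Qed.

Definition phi_sign n (i : nat) : algC := (-1) ^+ (n.-1 - i).

Section StraighteningTerms.

Variable n : nat.
Hypothesis n_gt1 : (1 < n)%N.
Variable t : tableau n.

Lemma rel_span_cycle_term i : (i < n)%N ->
  rel_span (e t - phi_sign n i *: e (phiT (phiT t i) n.-1)).
Proof.
move=> lt_i; rewrite /phiT mulgA gamma_last_mul_gamma //.
have -> : phi_sign n i = (-1) ^+ odd_perm (cycle_perm n i n.-1).
  by rewrite odd_cycle_perm ?signr_odd // /N; lia.
by apply: rel_span_col_perm => k; apply: col_cycle_perm; rewrite /N; lia.
Qed.

Lemma rel_span_swap_term i k : (i < n)%N -> (k < n.-1)%N ->
  rel_span (e (swap t (cell1 n i) (cell2 n k))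
            + (phi_sign n i * phi_sign n k) *: e (phiT (phiT t i) k)).
Proof.
move=> lt_i lt_k.
set g := (cycle_perm n i n.-1 * cycle_perm n (n + k) (n.-1 + n.-1))%g.
have -> : phiT (phiT t i) k = (g * swap t (cell1 n i) (cell2 n k))%g.
  by rewrite /phiT /swap mulgA gamma_mul_gamma // !mulgA.
have -> : phi_sign n i * phi_sign n k = - (-1) ^+ odd_perm g.
  rewrite odd_permM signr_addb !odd_cycle_perm ?signr_odd /phi_sign; try (rewrite /N; lia).
  have -> : (n.-1 - k = (n.-1 + n.-1 - (n + k)).+1)%N by lia.
  by rewrite exprS mulN1r mulrN.
rewrite scaleNr; apply: rel_span_col_perm => x.
by rewrite permM !col_cycle_perm //; rewrite /N; lia.
Qed.

End StraighteningTerms.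

Lemma eta_add_phi_gamma m (t : tableau m.+1) :
  let s := phi_sign m.+1 in
  eta t + (phi t + \sum_(i < m.+1) s i *: phi (phiT t i)) =
    \sum_(i < m.+1) (e t - s i *: e (phiT (phiT t i) m))
  - \sum_(i < m.+1) \sum_(k < m)
      (e (swap t (cell1 m.+1 i) (cell2 m.+1 k)) + (s i * s k) *: e (phiT (phiT t i) k)).
Proof.
move=> s.
pose swaps := \sum_(i < m.+1) \sum_(k < m) e (swap t (cell1 m.+1 i) (cell2 m.+1 k)).
pose once := \sum_(i < m.+1) s i *: e (phiT t i).
pose twice := \sum_(i < m.+1) \sum_(k < m) (s i * s k) *: e (phiT (phiT t i) k).
pose cycled := \sum_(i < m.+1) s i *: e (phiT (phiT t i) m).
have -> : eta t = m%:R *: e t - swaps by rewrite /eta /pi11 exchange_big.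
have -> : phi t = e t - once by [].
have -> : \sum_(i < m.+1) s i *: phi (phiT t i) = once - (twice + cycled).
  under eq_bigr => i _ do rewrite scalerBr scaler_sumr big_ord_recr /=.
  rewrite sumrB big_split /=; congr (_ - (_ + _)).
    by apply: eq_bigr => i _; apply: eq_bigr => k _; rewrite scalerA.
  by apply: eq_bigr => i _; rewrite /s /phi_sign subnn expr0 scale1r.
rewrite sumrB sumr_const card_ord.
under [X in _ = _ - X]eq_bigr => i _ do rewrite big_split.
rewrite big_split -/swaps -/twice -/cycled scaler_nat.
by apply/ffunP => u; rewrite !(ffunE, ffunMnE); ring.
Qed.

Theorem mainTheorem6 (n : nat) (hn : (2 <= n)%N) :
  forall t : tableau n, in_im_phi_mod_rel (eta t).
Proof.
case: n hn => // m m_gt0 t; set s := phi_sign m.+1.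
apply: (@im_phi_mod_rel_of_spans _ _ (- (phi t + \sum_(i < m.+1) s i *: phi (phiT t i)))).
  apply/in_spanN/in_spanD; first exact: in_span_gen.
  by apply: in_span_sum => i; apply/in_spanZ/in_span_gen.
rewrite opprK eta_add_phi_gamma; apply: in_spanB; apply: in_span_sum => i.
  exact: rel_span_cycle_term.
by apply: in_span_sum => k; apply: rel_span_swap_term.
Qed.
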